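(* Let $\mathbb A$ be an abelian category with enough projective objects and let $(f_0,f_1):a\to b$ be a morphism in $\mathbb A^{[1]}_c$, with $a:A_1\to A_0$, $b:B_1\to B_0$. Let $K=A_0\times_{B_0}B_1$ be the pull-back of $f_0$ and $b$, with projections $k:K\to A_0$, $\kappa:K\to B_1$, and let $k':A_1\to K$ be the morphism with $kk'=a$, $\kappa k'=f_1$. Choose an epimorphism $\epsilon:C_0\to K$ with $C_0$ projective, and let $C_1=C_0\times_K A_1$ be the pull-back of $\epsilon$ and $k'$, with projections $c:C_1\to C_0$ and $\epsilon':C_1\to A_1$. Then $(k\epsilon,\epsilon'):c\to a$ is a morphism of $\mathbb A^{[1]}_c$, $\kappa\epsilon$ is a 2-arrow $(f_0,f_1)\circ(k\epsilon,\epsilon')\Rightarrow 0$, and the triple $(c,(k\epsilon,\epsilon'),\kappa\epsilon)$ is a 2-kernel of $(f_0,f_1)$ in $\mathbb A^{[1]}_c$.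
   Context: Let $\mathbb A$ be an abelian category. The 2-category $\mathbb A^{[1]}$ has as objects the morphisms $a:A_1\to A_0$ of $\mathbb A$. For objects $a:A_1\to A_0$ and $b:B_1\to B_0$, a morphism $a\to b$ is a pair $(f_0,f_1)$ of morphisms $f_i:A_i\to B_i$ of $\mathbb A$ with $b f_1=f_0 a$; composition is componentwise. A 2-arrow $(f_0,f_1)\Rightarrow(g_0,g_1)$ between morphisms $a\to b$ is a morphism $\alpha:A_0\to B_1$ of $\mathbb A$ with $f_1-g_1=\alpha a$ and $f_0-g_0=b\alpha$; vertical composition is addition of such $\alpha$'s, and whiskering is given by $(h_0,h_1)\circ\alpha=h_1\alpha$ and $\alpha\circ(e_0,e_1)=\alpha e_0$. All 2-arrows are invertible. $\mathbb A^{[1]}_c$ is the full 2-subcategory of $\mathbb A^{[1]}$ on the objects $a:A_1\to A_0$ with $A_0$ projective in $\mathbb A$. In a 2-category $\mathcal C$ of this kind (with zero morphisms), a 2-kernel of $f:a\to b$ is a triple $(k,u:k\to a,\kappa:fu\Rightarrow0)$ such that for every object $x$ of $\mathcal C$ the functor $v\mapsto (uv, \kappa v)$ from $\mathbf{Hom}(x,k)$ to the groupoid of pairs $(w\in\mathbf{Hom}(x,a),\ \phi:fw\Rightarrow 0)$ (morphisms: 2-arrows $w\Rightarrow w'$ compatible with the $\phi$'s) is an equivalence of groupoids. *)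

From HB Require Import structures.
From mathcomp Require Import all_boot all_algebra.
Set Implicit Arguments. Unset Strict Implicit. Unset Printing Implicit Defensive.
Import GRing.Theory.
Local Open Scope ring_scope.

Record preadditive := PreAdditive {
  Obj : Type;
  Mor : Obj -> Obj -> zmodType;
  idm : forall X, Mor X X;
  comp : forall X Y Z, Mor Y Z -> Mor X Y -> Mor X Z;
  compA : forall X Y Z W (h : Mor Z W) (g : Mor Y Z) (f : Mor X Y),
      comp h (comp g f) = comp (comp h g) f;
  comp1m : forall X Y (f : Mor X Y), comp (idm Y) f = f;
  compm1 : forall X Y (f : Mor X Y), comp f (idm X) = f;
  compDl : forall X Y Z (g g' : Mor Y Z) (f : Mor X Y),
      comp (g + g') f = comp g f + comp g' f;
  compDr : forall X Y Z (g : Mor Y Z) (f f' : Mor X Y),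
      comp g (f + f') = comp g f + comp g f'
}.
Arguments Mor {p} X Y.
Arguments idm {p} X.
Arguments comp {p X Y Z} _ _.

Notation "g \oc f" := (comp g f) (at level 40, left associativity).

Section Cat.
Variable C : preadditive.

Definition mono (X Y : Obj C) (f : Mor X Y) : Prop :=
  forall W (g h : Mor W X), f \oc g = f \oc h -> g = h.
Definition epi (X Y : Obj C) (f : Mor X Y) : Prop :=
  forall W (g h : Mor Y W), g \oc f = h \oc f -> g = h.

Definition is_zero_obj (Z : Obj C) : Prop :=
  (forall X (f g : Mor X Z), f = g) /\ (forall X (f g : Mor Z X), f = g).

Definition is_product (X Y P : Obj C) (p1 : Mor P X) (p2 : Mor P Y) : Prop :=
  forall W (u : Mor W X) (v : Mor W Y),
    exists! h : Mor W P, p1 \oc h = u /\ p2 \oc h = v.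

Definition is_kernel (X Y K : Obj C) (f : Mor X Y) (i : Mor K X) : Prop :=
  f \oc i = 0 /\
  forall W (g : Mor W X), f \oc g = 0 -> exists! h : Mor W K, i \oc h = g.

Definition is_cokernel (X Y Q : Obj C) (f : Mor X Y) (q : Mor Y Q) : Prop :=
  q \oc f = 0 /\
  forall W (g : Mor Y W), g \oc f = 0 -> exists! h : Mor Q W, h \oc q = g.

Definition abelian : Prop :=
  (exists Z : Obj C, is_zero_obj Z) /\
  (forall X Y : Obj C, exists (P : Obj C) (p1 : Mor P X) (p2 : Mor P Y),
      is_product p1 p2) /\
  (forall (X Y : Obj C) (f : Mor X Y), exists (K : Obj C) (i : Mor K X),
      is_kernel f i) /\
  (forall (X Y : Obj C) (f : Mor X Y), exists (Q : Obj C) (q : Mor Y Q),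
      is_cokernel f q) /\
  (forall (X Y : Obj C) (f : Mor X Y), mono f ->
      exists (Z : Obj C) (g : Mor Y Z), is_kernel g f) /\
  (forall (X Y : Obj C) (f : Mor X Y), epi f ->
      exists (Z : Obj C) (g : Mor Z X), is_cokernel g f).

Definition projective (P : Obj C) : Prop :=
  forall (X Y : Obj C) (e : Mor X Y), epi e ->
    forall g : Mor P Y, exists h : Mor P X, e \oc h = g.

Definition enough_projectives : Prop :=
  forall X : Obj C, exists (P : Obj C) (e : Mor P X), projective P /\ epi e.

Definition is_pullback (X Y Z P : Obj C) (f : Mor X Z) (g : Mor Y Z)
    (p1 : Mor P X) (p2 : Mor P Y) : Prop :=
  f \oc p1 = g \oc p2 /\
  forall W (u : Mor W X) (v : Mor W Y), f \oc u = g \oc v ->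
    exists! h : Mor W P, p1 \oc h = u /\ p2 \oc h = v.

Local Unset Implicit Arguments.

(** Objects of A^[1]: morphisms a : A_1 -> A_0. *)
Record arr := Arr { arr1 : Obj C; arr0 : Obj C; amor : Mor arr1 arr0 }.

Definition arr_c (x : arr) : Prop := projective (arr0 x).

Definition is_arr_mor (x y : arr) (f0 : Mor (arr0 x) (arr0 y))
    (f1 : Mor (arr1 x) (arr1 y)) : Prop :=
  amor y \oc f1 = f0 \oc amor x.

Definition is_2arrow (x y : arr) (f0 g0 : Mor (arr0 x) (arr0 y))
    (f1 g1 : Mor (arr1 x) (arr1 y)) (alpha : Mor (arr0 x) (arr1 y)) : Prop :=
  f1 - g1 = alpha \oc amor x /\ f0 - g0 = amor y \oc alpha.

(** For every object x of A^[1]_c, the functor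
       v |-> (u v, kap v) = ((u0 v0, u1 v1), kap v0),
       beta |-> u beta = u1 beta
    from Mor(x,k) to the groupoid of pairs (w : x -> a, phi : f w => 0)
    (an arrow alpha : (w,phi) -> (w',phi') being a 2-arrow alpha : w => w'
     with phi = phi' . (f alpha), i.e. phi = f1 alpha + phi')
    is an equivalence of groupoids: faithful, full and essentially surjective. *)
Definition is_2kernel (a b : arr) (f0 : Mor (arr0 a) (arr0 b))
    (f1 : Mor (arr1 a) (arr1 b)) (k : arr) (u0 : Mor (arr0 k) (arr0 a))
    (u1 : Mor (arr1 k) (arr1 a)) (kap : Mor (arr0 k) (arr1 b)) : Prop :=
  arr_c k /\ is_arr_mor k a u0 u1 /\
  is_2arrow k b (f0 \oc u0) 0 (f1 \oc u1) 0 kap /\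
  forall x : arr, arr_c x ->
  (* faithful *)
  (forall (v0 v0' : Mor (arr0 x) (arr0 k)) (v1 v1' : Mor (arr1 x) (arr1 k))
          (beta beta' : Mor (arr0 x) (arr1 k)),
      is_arr_mor x k v0 v1 -> is_arr_mor x k v0' v1' ->
      is_2arrow x k v0 v0' v1 v1' beta -> is_2arrow x k v0 v0' v1 v1' beta' ->
      u1 \oc beta = u1 \oc beta' -> beta = beta') /\
  (* full *)
  (forall (v0 v0' : Mor (arr0 x) (arr0 k)) (v1 v1' : Mor (arr1 x) (arr1 k))
          (alpha : Mor (arr0 x) (arr1 a)),
      is_arr_mor x k v0 v1 -> is_arr_mor x k v0' v1' ->
      is_2arrow x a (u0 \oc v0) (u0 \oc v0') (u1 \oc v1) (u1 \oc v1') alpha ->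
      kap \oc v0 = f1 \oc alpha + kap \oc v0' ->
      exists beta : Mor (arr0 x) (arr1 k),
        is_2arrow x k v0 v0' v1 v1' beta /\ u1 \oc beta = alpha) /\
  (* essentially surjective *)
  (forall (w0 : Mor (arr0 x) (arr0 a)) (w1 : Mor (arr1 x) (arr1 a))
          (phi : Mor (arr0 x) (arr1 b)),
      is_arr_mor x a w0 w1 -> is_2arrow x b (f0 \oc w0) 0 (f1 \oc w1) 0 phi ->
      exists (v0 : Mor (arr0 x) (arr0 k)) (v1 : Mor (arr1 x) (arr1 k))
             (alpha : Mor (arr0 x) (arr1 a)),
        is_arr_mor x k v0 v1 /\
        is_2arrow x a (u0 \oc v0) w0 (u1 \oc v1) w1 alpha /\
        kap \oc v0 = f1 \oc alpha + phi).

End Cat.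

Arguments Arr {C arr1 arr0} amor.
Arguments arr_c {C} x.
Arguments is_arr_mor {C} x y f0 f1.
Arguments is_2arrow {C} x y f0 g0 f1 g1 alpha.
Arguments is_2kernel {C} a b f0 f1 k u0 u1 kap.

From Pilot Require Import Defs.
From HB Require Import structures.
From mathcomp Require Import all_boot all_algebra.
Local Open Scope ring_scope.
Import GRing.Theory.
Set Implicit Arguments. Unset Strict Implicit. Unset Printing Implicit Defensive.

(* A map into C1 is the
   same as a pair of maps into C0 and A1 agreeing over K, and a map into K the
   same as a pair of maps into A0 and B1 agreeing over B0.  Faithfulness is the
   joint monicity of the projections of C1.  For fullness, eps (v0 - v0') and
   k' alpha have the same projections to A0 and B1, so (v0 - v0', alpha)
   factors through C1.  For essential surjectivity, (w0, phi) factors through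
   K, the factor lifts along the epimorphism eps because X0 is projective, and
   the lift together with w1 factors through C1; the resulting 2-arrow is 0. *)

Section Preadditive.
Variable C : preadditive.

Lemma comp0m (X Y Z : Obj C) (f : Mor X Y) : (0 : Mor Y Z) \oc f = 0.
Proof.
have h := compDl (0 : Mor Y Z) 0 f; rewrite addr0 in h.
by apply: (@addrI _ (0 \oc f)); rewrite -h addr0.
Qed.

Lemma compm0 (X Y Z : Obj C) (g : Mor Y Z) : g \oc (0 : Mor X Y) = 0.
Proof.
have h := compDr g (0 : Mor X Y) 0; rewrite addr0 in h.
by apply: (@addrI _ (g \oc 0)); rewrite -h addr0.
Qed.

Lemma compBl (X Y Z : Obj C) (g g' : Mor Y Z) (f : Mor X Y) :
  (g - g') \oc f = g \oc f - g' \oc f.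
Proof. by have := compDl (g - g') g' f; rewrite subrK => ->; rewrite addrK. Qed.

Lemma compBr (X Y Z : Obj C) (g : Mor Y Z) (f f' : Mor X Y) :
  g \oc (f - f') = g \oc f - g \oc f'.
Proof. by have := compDr g (f - f') f'; rewrite subrK => ->; rewrite addrK. Qed.

Section Pullback.
Variables (X Y Z P : Obj C) (f : Mor X Z) (g : Mor Y Z).
Variables (p1 : Mor P X) (p2 : Mor P Y).
Hypothesis pbP : is_pullback f g p1 p2.

Lemma pullback_factor W (u : Mor W X) (v : Mor W Y) :
  f \oc u = g \oc v -> exists h : Mor W P, p1 \oc h = u /\ p2 \oc h = v.
Proof. by move=> /(pbP.2 W) [h [eh _]]; exists h. Qed.

Lemma pullback_jointly_mono W (h h' : Mor W P) :
  p1 \oc h = p1 \oc h' -> p2 \oc h = p2 \oc h' -> h = h'.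
Proof.
move=> e1 e2.
have comm : f \oc (p1 \oc h) = g \oc (p2 \oc h) by rewrite !Defs.compA pbP.1.
have [u [_ uniq_u]] := pbP.2 W _ _ comm.
by rewrite -(uniq_u h (conj erefl erefl)); apply: uniq_u.
Qed.

End Pullback.
End Preadditive.

Section TwoKernel.
Variables (C : preadditive) (A1 A0 B1 B0 K C0 C1 : Obj C).
Variables (a : Mor A1 A0) (b : Mor B1 B0) (f0 : Mor A0 B0) (f1 : Mor A1 B1).
Variables (k : Mor K A0) (kap : Mor K B1) (k' : Mor A1 K).
Variables (eps : Mor C0 K) (c : Mor C1 C0) (eps' : Mor C1 A1).
Hypothesis hK : is_pullback f0 b k kap.
Hypotheses (hk'1 : k \oc k' = a) (hk'2 : kap \oc k' = f1).
Hypothesis hC1 : is_pullback eps k' c eps'.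
Hypothesis heps : epi eps.

Lemma pullback_arr_mor : is_arr_mor (Arr c) (Arr a) (k \oc eps) eps'.
Proof. by rewrite /is_arr_mor /= -hk'1 -!Defs.compA hC1.1. Qed.

Lemma pullback_2arrow :
  is_2arrow (Arr c) (Arr b) (f0 \oc (k \oc eps)) 0 (f1 \oc eps') 0 (kap \oc eps).
Proof.
split; rewrite /= subr0; first by rewrite -hk'2 -!Defs.compA hC1.1.
by rewrite !Defs.compA hK.1.
Qed.

Variables (X1 X0 : Obj C) (xm : Mor X1 X0).

Lemma pullback_2kernel_faithful
    (v0 v0' : Mor X0 C0) (v1 v1' : Mor X1 C1)
    (beta beta' : Mor X0 C1) :
  is_2arrow (Arr xm) (Arr c) v0 v0' v1 v1' beta ->
  is_2arrow (Arr xm) (Arr c) v0 v0' v1 v1' beta' ->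
  eps' \oc beta = eps' \oc beta' -> beta = beta'.
Proof.
move=> [_ e] [_ e'] /= eps'beta; apply: (pullback_jointly_mono hC1) => //.
by rewrite /= in e e'; rewrite -e -e'.
Qed.

Lemma pullback_2kernel_full
    (v0 v0' : Mor X0 C0) (v1 v1' : Mor X1 C1)
    (alpha : Mor X0 A1) :
  is_arr_mor (Arr xm) (Arr c) v0 v1 -> is_arr_mor (Arr xm) (Arr c) v0' v1' ->
  is_2arrow (Arr xm) (Arr a) (k \oc eps \oc v0) (k \oc eps \oc v0')
    (eps' \oc v1) (eps' \oc v1') alpha ->
  kap \oc eps \oc v0 = f1 \oc alpha + kap \oc eps \oc v0' ->
  exists beta : Mor X0 C1,
    is_2arrow (Arr xm) (Arr c) v0 v0' v1 v1' beta /\ eps' \oc beta = alpha.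
Proof.
rewrite /is_arr_mor /= => hv hv' [e1 e0] /= ekap.
have lift_diff : eps \oc (v0 - v0') = k' \oc alpha.
  apply: (pullback_jointly_mono hK).
  - by rewrite !Defs.compA hk'1 -e0 compBr.
  - by rewrite !Defs.compA hk'2 compBr ekap addrK.
have [beta [cbeta eps'beta]] := pullback_factor hC1 lift_diff.
exists beta; split=> //; split=> /=; last by rewrite cbeta.
apply: (pullback_jointly_mono hC1).
- by rewrite compBr hv hv' Defs.compA cbeta compBl.
- by rewrite compBr e1 Defs.compA eps'beta.
Qed.

Lemma pullback_2kernel_ess_surj (projX0 : projective X0)
    (w0 : Mor X0 A0) (w1 : Mor X1 A1) (phi : Mor X0 B1) :
  is_arr_mor (Arr xm) (Arr a) w0 w1 ->
  is_2arrow (Arr xm) (Arr b) (f0 \oc w0) 0 (f1 \oc w1) 0 phi ->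
  exists (v0 : Mor X0 C0) (v1 : Mor X1 C1) (alpha : Mor X0 A1),
    is_arr_mor (Arr xm) (Arr c) v0 v1 /\
    is_2arrow (Arr xm) (Arr a) (k \oc eps \oc v0) w0 (eps' \oc v1) w1 alpha /\
    kap \oc eps \oc v0 = f1 \oc alpha + phi.
Proof.
rewrite /is_arr_mor /= => hw [+ +] /=; rewrite !subr0 => e1 e0.
have [g [kg kapg]] := pullback_factor hK e0.
have [v0 epsv0] := projX0 _ _ _ heps g.
have lift_w1 : eps \oc (v0 \oc xm) = k' \oc w1.
  apply: (pullback_jointly_mono hK).
  - by rewrite !Defs.compA -(Defs.compA k) epsv0 kg hk'1 hw.
  - by rewrite !Defs.compA -(Defs.compA kap) epsv0 kapg hk'2 e1.
have [v1 [cv1 eps'v1]] := pullback_factor hC1 lift_w1.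
exists v0, v1, 0; split; first by rewrite /is_arr_mor /= cv1.
split; last by rewrite compm0 add0r -Defs.compA epsv0 kapg.
split; rewrite /= ?comp0m; first by rewrite eps'v1 subrr.
by rewrite compm0 -Defs.compA epsv0 kg subrr.
Qed.

End TwoKernel.

Theorem mainTheorem11 (C : preadditive) (HC : abelian C)
  (HP : enough_projectives C)
  (A1 A0 B1 B0 : Obj C) (a : Mor A1 A0) (b : Mor B1 B0)
  (pA : projective A0) (pB : projective B0)
  (f0 : Mor A0 B0) (f1 : Mor A1 B1) (hf : b \oc f1 = f0 \oc a)
  (K : Obj C) (k : Mor K A0) (kap : Mor K B1) (hK : is_pullback f0 b k kap)
  (k' : Mor A1 K) (hk'1 : k \oc k' = a) (hk'2 : kap \oc k' = f1)
  (C0 : Obj C) (eps : Mor C0 K) (pC0 : projective C0) (heps : epi eps)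
  (C1 : Obj C) (c : Mor C1 C0) (eps' : Mor C1 A1)
  (hC1 : is_pullback eps k' c eps') :
  is_arr_mor (Arr c) (Arr a) (k \oc eps) eps' /\
  is_2arrow (Arr c) (Arr b) (f0 \oc (k \oc eps)) 0 (f1 \oc eps') 0 (kap \oc eps) /\
  is_2kernel (Arr a) (Arr b) f0 f1 (Arr c) (k \oc eps) eps' (kap \oc eps).
Proof.
have mor := pullback_arr_mor hk'1 hC1.
have two := pullback_2arrow hK hk'2 hC1.
do 5 (split=> //); move=> [X1 X0 xm] projX0; split; [|split].
- move=> v0 v0' v1 v1' beta beta' _ _; exact: (pullback_2kernel_faithful hC1).
- exact: (pullback_2kernel_full hK hk'1 hk'2 hC1).
- exact: (pullback_2kernel_ess_surj hK hk'1 hk'2 hC1 heps projX0).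
Qed.
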